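(* For all integers $n\ge k\ge1$, $$L_{m,\bar{\alpha}}(n+1,k)=L_{m,\bar{\alpha}}(n,k-1)+\bigl(\alpha_k+\alpha_n+(k+n)m\bigr)L_{m,\bar{\alpha}}(n,k),$$ and for all $n\ge0$, $$L_{m,\bar{\alpha}}(n,0)=\prod_{i=0}^{n-1}(\alpha_0+\alpha_i+im).$$
   Context: Fix a real number $m$ and a sequence $\bar{\alpha}=(\alpha_0,\alpha_1,\ldots)$ of real numbers. Let $(x;\bar{\alpha}|m)_n=\prod_{j=0}^{n-1}(x-\alpha_j-jm)$, with $(x;\bar{\alpha}|m)_0=1$. The $\bar{\alpha}$-Whitney numbers of the first kind $w_{m,\bar{\alpha}}(n,k)$ and second kind $W_{m,\bar{\alpha}}(n,k)$ are defined by the polynomial identities $(x;\bar{\alpha}|m)_n=\sum_{k=0}^n w_{m,\bar{\alpha}}(n,k)x^k$ and $x^n=\sum_{k=0}^n W_{m,\bar{\alpha}}(n,k)(x;\bar{\alpha}|m)_k$, both vanishing for $k>n$ or $k<0$. The $\bar{\alpha}$-Whitney-Lah numbers are $$L_{m,\bar{\alpha}}(n,k)=\sum_{j=k}^{n}(-1)^{n-j}\,w_{m,\bar{\alpha}}(n,j)\,W_{m,\bar{\alpha}}(j,k),$$ with $L_{m,\bar{\alpha}}(0,0)=1$ and $L_{m,\bar{\alpha}}(n,k)=0$ for $n<k$ or $k<0$. An empty product equals $1$. *)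

From HB Require Import structures.
From mathcomp Require Import all_boot all_order all_algebra.
Set Implicit Arguments. Unset Strict Implicit. Unset Printing Implicit Defensive.
Import Order.TTheory GRing.Theory Num.Theory.
Local Open Scope ring_scope.

Definition gff (R : realFieldType) (alpha : nat -> R) (m : R) (n : nat) : {poly R} :=
  \prod_(j < n) ('X - (alpha j + j%:R * m)%:P).

Definition wh1 (R : realFieldType) (alpha : nat -> R) (m : R) (n k : nat) : R :=
  (gff alpha m n)`_k.

Definition is_wh2 (R : realFieldType) (alpha : nat -> R) (m : R)
    (W : nat -> nat -> R) : Prop :=
  (forall n : nat, 'X^n = \sum_(k < n.+1) W n k *: gff alpha m k) /\
  (forall n k : nat, (n < k)%N -> W n k = 0).

Definition whLah (R : realFieldType) (alpha : nat -> R) (m : R)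
    (W : nat -> nat -> R) (n k : nat) : R :=
  \sum_(k <= j < n.+1) (-1) ^+ (n - j) * wh1 alpha m n j * W j k.

From HB Require Import structures.
From mathcomp Require Import all_boot all_order all_algebra ring.
Import Order.TTheory GRing.Theory Num.Theory.
Set Implicit Arguments. Unset Strict Implicit. Unset Printing Implicit Defensive.
Local Open Scope ring_scope.

(* The Lah numbers L(n, k) are the coordinates of the rising factorial
   (x + alpha_0)(x + alpha_1 + m)...(x + alpha_(n-1) + (n-1)m) in the basis of
   generalized falling factorials (x; alpha | m)_k: this follows from
   x^j = sum_k W(j, k) (x; alpha | m)_k, because the coefficients of the rising
   factorial are the w(n, j) up to the sign (-1)^(n-j).  Multiplying by
   x + alpha_n + n m and using x (x; alpha | m)_k = (x; alpha | m)_(k+1) +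
   (alpha_k + k m) (x; alpha | m)_k gives the expansion of the next rising
   factorial, and comparing coordinates in this triangular monic basis yields
   the recurrence; the case k = 0 of it iterates to the product formula. *)

Section FallingRising.

Variable R : comNzRingType.
Implicit Type c : nat -> R.

Definition falling c n : {poly R} := \prod_(j < n) ('X - (c j)%:P).
Definition rising c n : {poly R} := \prod_(j < n) ('X + (c j)%:P).

Lemma size_falling c n : size (falling c n) = n.+1.
Proof. by rewrite size_prod_XsubC /index_enum unlock -enumT size_enum_ord. Qed.

Lemma falling_monic c n : falling c n \is monic.
Proof. exact: monic_prod_XsubC. Qed.

Lemma coef_falling_gt c n i : (n < i)%N -> (falling c n)`_i = 0.
Proof. by move=> lt_ni; rewrite nth_default // size_falling. Qed.

Lemma coef_rising c n j : (rising c n)`_j = (-1) ^+ (n - j) * (falling c n)`_j.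
Proof.
elim: n j => [|n IHn] j; first by rewrite /rising /falling !big_ord0 mul1r.
rewrite /rising /falling !big_ord_recr /= -/(rising c n) -/(falling c n).
rewrite mulrDr mulrBr !coefD !coefN !coefMX !coefMC.
case: j => [|j] /=.
  by rewrite IHn subn0 exprS add0r sub0r mulN1r mulNr mulrN opprK mulrA.
rewrite !IHn subSS mulrBr; congr (_ + _).
have [le_nj | lt_jn] := leqP n j.
  by rewrite coef_falling_gt ?ltnS // !(mul0r, mulr0, oppr0).
by rewrite -(subnSK lt_jn) exprS mulN1r mulNr opprK mulrA.
Qed.

Lemma risingE c n : rising c n = falling (fun j => - c j) n.
Proof. by apply: eq_bigr => j _; rewrite polyCN opprK. Qed.

Lemma size_rising c n : size (rising c n) = n.+1.
Proof. by rewrite risingE size_falling. Qed.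

Lemma falling_mulXaddC c k a :
  falling c k * ('X + a%:P) = falling c k.+1 + (c k + a) *: falling c k.
Proof. by rewrite /falling big_ord_recr /= -mul_polyC polyCD; ring. Qed.

End FallingRising.

Lemma coord_monic_triangular (R : nzRingType) (p : nat -> {poly R}) N
    (e f : nat -> R) :
  (forall k, size (p k) = k.+1) -> (forall k, p k \is monic) ->
  \sum_(k < N) e k *: p k = \sum_(k < N) f k *: p k ->
  forall k, (k < N)%N -> e k = f k.
Proof.
move=> size_p monic_p; elim: N => [|N IHN] eq_ef k //.
rewrite !big_ord_recr /= in eq_ef.
have coef_top i : (i < N)%N -> (p i)`_N = 0.
  by move=> lt_iN; rewrite nth_default // size_p.
have eqN : e N = f N.
  move/(congr1 (fun q : {poly R} => q`_N)): eq_ef.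
  rewrite !coefD !coef_sum !coefZ.
  have lead_pN : (p N)`_N = 1 by rewrite -(monicP (monic_p N)) /lead_coef size_p.
  rewrite !big1 ?add0r ?lead_pN ?mulr1 // => i _; by rewrite coefZ coef_top ?mulr0.
rewrite ltnS leq_eqVlt => /predU1P [-> //|]; apply: IHN.
by move: eq_ef; rewrite eqN => /addIr.
Qed.

Section WhitneyLah.

Variables (R : realFieldType) (alpha : nat -> R) (m : R) (W : nat -> nat -> R).
Hypothesis HW : is_wh2 alpha m W.

Let shift j := alpha j + j%:R * m.
Let L := whLah alpha m W.

Lemma whLah_gt n k : (n < k)%N -> L n k = 0.
Proof. by move=> lt_nk; rewrite /L /whLah big_geq. Qed.

Lemma Xn_gff_expansion N j : (j < N)%N -> 'X^j = \sum_(k < N) W j k *: gff alpha m k.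
Proof.
case: HW => HX W_gt lt_jN.
rewrite HX (big_ord_widen N (fun k => W j k *: gff alpha m k) lt_jN) big_mkcond.
apply: eq_bigr => k _; case: ifP => // /negbT; rewrite -ltnNge => lt_jk.
by rewrite W_gt ?scale0r.
Qed.

Lemma rising_whLah n : rising shift n = \sum_(k < n.+1) L n k *: gff alpha m k.
Proof.
rewrite -{1}(coefK (rising shift n)) poly_def size_rising.
under eq_bigr => j _ do rewrite coef_rising (Xn_gff_expansion (ltn_ord j)) scaler_sumr.
rewrite exchange_big; apply: eq_bigr => k _.
under eq_bigr => j _ do rewrite scalerA.
rewrite -scaler_suml; congr (_ *: _); case: HW => _ W_gt.
rewrite /L /whLah -(big_mkord xpredT (fun j => (-1) ^+ (n - j) * (falling shift n)`_j * W j k)).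
rewrite (big_cat_nat (leq0n k) (ltnW (ltn_ord k))) /= big_nat_cond big1 ?add0r //.
by move=> j /andP [/andP [_ lt_jk] _]; rewrite W_gt ?mulr0.
Qed.

Lemma whLah00 : L 0 0 = 1.
Proof.
have := congr1 (fun p : {poly R} => p`_0) (rising_whLah 0).
by rewrite /rising big_ord0 big_ord1 /gff big_ord0 coefZ !coefC mulr1.
Qed.

Lemma whLah_succ n k : (k < n.+2)%N ->
  L n.+1 k = (if k is k'.+1 then L n k' else 0) + (shift k + shift n) * L n k.
Proof.
move: k; set e := fun i => (if i is i'.+1 then L n i' else 0) + (shift i + shift n) * L n i.
have rising_succ : rising shift n.+1 = \sum_(i < n.+2) e i *: gff alpha m i.
  have -> : rising shift n.+1 = rising shift n * ('X + (shift n)%:P).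
    by rewrite /rising big_ord_recr.
  rewrite rising_whLah mulr_suml.
  under eq_bigr => i _ do rewrite -scalerAl -[gff alpha m i]/(falling shift i) falling_mulXaddC scalerDr scalerA.
  under [RHS]eq_bigr => k _ do rewrite scalerDl.
  rewrite !big_split /=; congr (_ + _).
    by rewrite [RHS]big_ord_recl /= scale0r add0r.
  rewrite [RHS]big_ord_recr /= whLah_gt // mulr0 scale0r addr0.
  by apply: eq_bigr => k _; rewrite mulrC.
move=> k lt_k; apply: (coord_monic_triangular (p := gff alpha m) (f := e) _ _ _ lt_k).
- exact: size_falling shift.
- exact: falling_monic shift.
- by rewrite -rising_whLah rising_succ.
Qed.

End WhitneyLah.

Theorem mainTheorem10 (R : realFieldType) (m : R) (alpha : nat -> R)
    (W : nat -> nat -> R) (HW : is_wh2 alpha m W) :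
  (forall n k : nat, (1 <= k)%N -> (k <= n)%N ->
     whLah alpha m W n.+1 k =
       whLah alpha m W n k.-1 + (alpha k + alpha n + (k + n)%:R * m) * whLah alpha m W n k) /\
  (forall n : nat,
     whLah alpha m W n 0 = \prod_(i < n) (alpha 0%N + alpha i + i%:R * m)).
Proof.
split.
  move=> n [|k] // _ le_kn.
  rewrite (whLah_succ HW) 1?ltnW ?ltnS // natrD /=; ring.
elim=> [|n IHn].
  by rewrite big_ord0 (whLah00 HW).
rewrite (whLah_succ HW) // add0r IHn big_ord_recr /=; ring.
Qed.
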